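(* Let $m\ge1$ and let $\Psi_m(X)=\det(x_{ij})_{1\le i,j\le m}$, viewed as a polynomial in the $m^2$ variables $x_{11},\ldots,x_{mm}$ (i.e. a polynomial on $\mathbb{R}^{m^2}$). Then $\Psi_m$ is an irreducible homogeneous polynomial of degree $m$ which is an eigenfunction of $L$, i.e. $L(\Psi_m)$ is divisible by $\Psi_m$ in $\mathbb{R}[x_{11},\ldots,x_{mm}]$.
   Context: For a polynomial $f$ on $\mathbb{R}^n$ in variables $x_1,\ldots,x_n$, $L(f):=|\nabla f|^2\Delta f-\sum_{i,j=1}^n f_{x_i}f_{x_j}f_{x_ix_j}$. A homogeneous polynomial $f$ is called an eigenfunction of $L$ if $L(f)\equiv 0 \bmod f$, i.e. $L(f)=\lambda f$ for some polynomial $\lambda$. *)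

From HB Require Import structures.
From mathcomp Require Import all_boot all_order all_algebra.
From mathcomp Require Import reals.
From mathcomp Require Import mpoly.
Set Implicit Arguments. Unset Strict Implicit. Unset Printing Implicit Defensive.
Import Order.TTheory GRing.Theory Num.Theory.
Local Open Scope ring_scope.

Definition Lop (R : ringType) (n : nat) (f : {mpoly R[n]}) : {mpoly R[n]} :=
  (\sum_(i < n) f^`M(i) * f^`M(i)) * (\sum_(i < n) (f^`M(i))^`M(i))
  - \sum_(i < n) \sum_(j < n) f^`M(i) * f^`M(j) * (f^`M(j))^`M(i).

Definition eigenfunctionL (R : ringType) (n : nat) (f : {mpoly R[n]}) : Prop :=
  (exists d : nat, f \is d.-homog) /\ exists lambda : {mpoly R[n]}, Lop f = lambda * f.

Definition irreducible_elt (R : idomainType) (p : R) : Prop :=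
  p != 0 /\ p \isn't a GRing.unit /\
  forall q r : R, p = q * r -> q \is a GRing.unit \/ r \is a GRing.unit.

Definition detpoly (R : comRingType) (m : nat) : {mpoly R[m * m]} :=
  \det (\matrix_(i < m, j < m) ('X_(mxvec_index i j) : {mpoly R[m * m]})).

(* For X = (x_ij), multilinearity of det in the rows gives d(det X)/dx_ab = C_ab, the
   (a,b) cofactor, while d^2(det X)/dx_ab dx_cd vanishes for a = c and otherwise is the
   determinant of X with rows a and c replaced by the unit rows e_b and e_d.  Hence
   Delta(det X) = 0, and the sum over b, d against C_ab C_cd replaces rows a and c of X by
   its cofactor rows.  As X adj(X) = det X, right multiplication by X^T turns that matrix
   into X X^T with rows a and c replaced by (det X) e_a and (det X) e_c, which exhibits
   the factor det X in L(det X).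

   For irreducibility, det X has degree one in each variable and degree at most one in any
   two variables sharing a row or a column.  Degrees in a set of variables add under
   multiplication, so if det X = q r then each variable occurs in exactly one of q, r, and
   variables sharing a row or a column occur in the same factor.  Any two entries are
   linked through such pairs, so one factor involves no variable: it is a nonzero
   constant. *)

From HB Require Import structures.
From mathcomp Require Import all_boot all_order all_algebra.
From mathcomp Require Import reals.
From mathcomp Require Import mpoly.
From mathcomp Require Import perm zify.
Set Implicit Arguments. Unset Strict Implicit. Unset Printing Implicit Defensive.
Import Order.TTheory GRing.Theory Num.Theory.
Local Open Scope ring_scope.

Definition mdeg_in n (S : {set 'I_n}) (x : 'X_{1..n}) : nat := (\sum_(i in S) x i)%N.

Lemma mdeg_in0 n (S : {set 'I_n}) : mdeg_in S 0%MM = 0%N.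
Proof. by rewrite /mdeg_in big1 // => i _; rewrite mnm0E. Qed.

Lemma mdeg_inD n (S : {set 'I_n}) :
  {morph mdeg_in S : x y / (x + y)%MM >-> (x + y)%N}.
Proof. by move=> x y; rewrite /mdeg_in -big_split; apply: eq_bigr => i _; rewrite mnmDE. Qed.

HB.instance Definition _ n S := isMeasure.Build n (@mdeg_in n S) (mdeg_in0 S) (@mdeg_inD n S).

Lemma mdeg_in1 n (k : 'I_n) x : mdeg_in [set k] x = x k.
Proof. exact: big_set1. Qed.

Lemma mdeg_in2 n (k k' : 'I_n) x : k != k' -> mdeg_in [set k; k'] x = (x k + x k')%N.
Proof. by move=> kk'; rewrite /mdeg_in big_setU1 ?inE //= big_set1. Qed.

Lemma mmeasure_mdeg_in_subset n (R : ringType) (S T : {set 'I_n}) (p : {mpoly R[n]}) :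
  S \subset T -> (mmeasure (mdeg_in S) p <= mmeasure (mdeg_in T) p)%N.
Proof.
move=> ST; rewrite [X in (X <= _)%N]mmeasureE; apply/bigmax_leqP_seq => x xp _.
apply: leq_trans (mmeasure_mnm_lt (mdeg_in T) xp); rewrite ltnS.
by rewrite /mdeg_in [X in (_ <= X)%N](big_setID S) (setIidPr ST) leq_addr.
Qed.

Section MeasureMul.
Variables (n : nat) (R : idomainType) (mf : measure n).
Implicit Types (f p q r u v : {mpoly R[n]}).
Local Notation mu := (mmeasure mf).

Lemma pihomog_eq0 p d : (mu p <= d)%N -> pihomog mf d p = 0.
Proof.
move=> le; rewrite pihomogE big_seq_cond big_pred0 // => x.
by apply/negbTE/andP => -[/(mmeasure_mnm_lt mf) lt /eqP ex]; lia.
Qed.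

Lemma mmeasure_dhomog p d : p \is d.-homog for mf -> (mu p <= d.+1)%N.
Proof. by move/dhomogP => hp; rewrite mmeasureE; apply/bigmax_leqP_seq => x /hp ->. Qed.

Lemma pihomog_top_neq0 p : p != 0 -> pihomog mf (mu p).-1 p != 0.
Proof.
move=> p0; apply/eqP => top0.
have := pihomog_partitionE (leqnn (mu p)).
rewrite [in X in _ = X](mpolySpred mf p0) big_ord_recr /= top0 addr0 => Ep.
have : (mu p <= (mu p).-1)%N.
  rewrite {1}Ep; apply: leq_trans (mmeasure_sum _ _ _ _) _.
  apply/bigmax_leqP => d _.
  exact: leq_trans (mmeasure_dhomog (pihomogP mf d p)) (ltn_ord d).
by rewrite {1}(mpolySpred mf p0) ltnn.
Qed.

Lemma pihomogM_dhomog d i j u v : u \is i.-homog for mf -> v \is j.-homog for mf ->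
  pihomog mf d (u * v) = if i + j == d then u * v else 0.
Proof.
move=> hu hv; have huv := dhomogM hu hv.
by case: eqP => [<-|/eqP ne]; [exact: pihomog_dE | exact: pihomog_ne0 ne huv].
Qed.

Lemma pihomogM_top p q : p != 0 -> q != 0 ->
  pihomog mf ((mu p).-1 + (mu q).-1) (p * q) =
  pihomog mf (mu p).-1 p * pihomog mf (mu q).-1 q.
Proof.
move=> p0 q0; set a := (mu p).-1; set b := (mu q).-1.
rewrite {1}(pihomog_partitionE (leqnn (mu p))) {1}(pihomog_partitionE (leqnn (mu q))).
rewrite (mpolySpred mf p0) (mpolySpred mf q0) -/a -/b.
have piM i j := pihomogM_dhomog (a + b) (pihomogP mf i p) (pihomogP mf j q).
rewrite mulr_suml raddf_sum big_ord_recr /= big1 ?add0r => [|i _].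
  rewrite mulr_sumr raddf_sum big_ord_recr /= big1 ?add0r => [|j _].
    by rewrite piM eqxx.
  by rewrite piM ifN // neq_ltn ltn_add2l ltn_ord.
rewrite mulr_sumr raddf_sum /= big1 // => j _.
by rewrite piM ifN // neq_ltn; have := ltn_ord i; have := ltn_ord j; lia.
Qed.

(* The top components of [p] and [q] multiply to a nonzero top component of [p * q]. *)
Lemma mmeasureM p q : p != 0 -> q != 0 -> mu (p * q) = (mu p + mu q).-1.
Proof.
move=> p0 q0; have := mpolySpred mf p0; have := mpolySpred mf q0.
move=> Sq Sp; apply/eqP; rewrite eqn_leq; apply/andP; split.
  rewrite mmeasureE; apply/bigmax_leqP_seq => x /msuppM_le /allpairsP.
  move=> [[x1 x2] [/= /(mmeasure_mnm_lt mf) lt1 /(mmeasure_mnm_lt mf) lt2 ->]] _.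
  by rewrite mfD; lia.
have : pihomog mf ((mu p).-1 + (mu q).-1) (p * q) != 0.
  by rewrite pihomogM_top // mulf_neq0 // pihomog_top_neq0.
by apply: contraR; rewrite -ltnNge => lt; apply/eqP/pihomog_eq0; lia.
Qed.

Lemma mmeasureM_factor f q r : f = q * r -> f != 0 ->
  [/\ 0 < mu q, 0 < mu r & mu q + mu r = (mu f).+1]%N.
Proof.
move=> -> /[dup] f0; rewrite mulf_eq0 negb_or => /andP[q0 r0].
rewrite !lt0n !mmeasure_poly_eq0 q0 r0 mmeasureM //.
by split=> //; rewrite prednK // (leq_trans _ (leq_addr _ _)) // lt0n mmeasure_poly_eq0.
Qed.

End MeasureMul.

(* [mmeasure mf p] exceeds by one the largest [mf]-weight of a monomial of [p]. *)
Definition involves n (R : ringType) (p : {mpoly R[n]}) (k : 'I_n) : bool :=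
  (1 < mmeasure (mdeg_in [set k]) p)%N.

Section Involves.
Variables (n : nat) (R : idomainType).
Implicit Types (f p q r : {mpoly R[n]}) (k : 'I_n).

Lemma involvesM_xor f q r k : f = q * r -> f != 0 -> mmeasure (mdeg_in [set k]) f = 2%N ->
  involves r k = ~~ involves q k.
Proof.
move=> fqr f0 degk; have [q1 r1] := mmeasureM_factor (mdeg_in [set k]) fqr f0.
by rewrite degk /involves -leqNgt => sum3; apply/idP/idP; lia.
Qed.

Lemma involvesM_eq f q r k k' : f = q * r -> f != 0 ->
  mmeasure (mdeg_in [set k]) f = 2%N -> mmeasure (mdeg_in [set k']) f = 2%N ->
  (mmeasure (mdeg_in [set k; k']) f <= 2)%N -> involves q k = involves q k'.
Proof.
move=> fqr f0 degk degk' degkk'.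
have := involvesM_xor fqr f0 degk; have := involvesM_xor fqr f0 degk'.
have [_ _] := mmeasureM_factor (mdeg_in [set k; k']) fqr f0.
have subk : [set k] \subset [set k; k'] by rewrite sub1set !inE eqxx.
have subk' : [set k'] \subset [set k; k'] by rewrite sub1set !inE eqxx orbT.
have := mmeasure_mdeg_in_subset q subk; have := mmeasure_mdeg_in_subset r subk.
have := mmeasure_mdeg_in_subset q subk'; have := mmeasure_mdeg_in_subset r subk'.
rewrite /involves -!leqNgt => h1 h2 h3 h4 sum xor1 xor2; apply/idP/idP; lia.
Qed.

End Involves.

Lemma unit_of_involves_none n (R : fieldType) (p : {mpoly R[n]}) :
  p != 0 -> (forall k, ~~ involves p k) -> p \is a GRing.unit.
Proof.
move=> p0 none; have const : p = (p@_0)%:MP.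
  apply: msize1_polyC; rewrite mmeasureE; apply/bigmax_leqP_seq => x xp _.
  suff -> : x = 0%MM by rewrite mf0.
  apply/mnmP => k; have := mmeasure_mnm_lt (mdeg_in [set k]) xp.
  by rewrite /= mdeg_in1 mnm0E; have := none k; rewrite /involves; lia.
rewrite const rmorph_unit // unitfE; apply: contraNneq p0 => p00.
by rewrite const p00.
Qed.

Definition set_row (T : Type) (m : nat) (A : 'M[T]_m) (i : 'I_m) (u : 'I_m -> T) :
  'M[T]_m := \matrix_(k, l) if k == i then u l else A k l.

Section SetRow.
Variables (R : comRingType) (m : nat).
Implicit Types (A : 'M[R]_m) (u v : 'I_m -> R).

Definition delta_row (j : 'I_m) : 'I_m -> R := fun l => (l == j)%:R.

Lemma set_rowC A i k u v : i != k ->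
  set_row (set_row A i u) k v = set_row (set_row A k v) i u.
Proof.
move=> ik; apply/matrixP => j l; rewrite !mxE.
by case: (eqVneq j k) => [->|]; rewrite ?(negbTE ik) // eq_sym (negbTE ik).
Qed.

Lemma expand_det_set_row A i u : \det (set_row A i u) = \sum_j u j * cofactor A i j.
Proof.
rewrite (expand_det_row _ i); apply: eq_bigr => j _; rewrite mxE eqxx; congr (_ * _).
rewrite /cofactor; congr (_ * \det _).
by apply/matrixP => k l; rewrite !mxE eq_sym (negbTE (neq_lift _ _)).
Qed.

Lemma det_set_row_delta A i j : \det (set_row A i (delta_row j)) = cofactor A i j.
Proof.
rewrite expand_det_set_row (bigD1 j) //= big1 ?addr0 /delta_row ?eqxx ?mul1r // => l lj.
by rewrite (negbTE lj) mul0r.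
Qed.

Lemma det_set_row_sum A i u :
  \det (set_row A i u) = \sum_j u j * \det (set_row A i (delta_row j)).
Proof. by rewrite expand_det_set_row; apply: eq_bigr => j _; rewrite det_set_row_delta. Qed.

Lemma det_set_rowZ A i c u :
  \det (set_row A i (fun l => c * u l)) = c * \det (set_row A i u).
Proof. by rewrite !expand_det_set_row mulr_sumr; apply: eq_bigr => j _; rewrite mulrA. Qed.

Lemma det_set_row0 A i : \det (set_row A i (fun=> 0)) = 0.
Proof. by rewrite expand_det_set_row big1 // => j _; rewrite mul0r. Qed.

Lemma det_set_row2_sum A a c u v : a != c ->
  \sum_b \sum_d u b * v d * \det (set_row (set_row A c (delta_row d)) a (delta_row b)) =
  \det (set_row (set_row A a u) c v).
Proof.
move=> ac; rewrite exchange_big [RHS]det_set_row_sum; apply: eq_bigr => d _.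
rewrite set_rowC // det_set_row_sum mulr_sumr; apply: eq_bigr => b _.
by rewrite mulrA [v d * _]mulrC.
Qed.

Lemma mul_row_cofactor A i j : \sum_l A j l * cofactor A i l = (j == i)%:R * \det A.
Proof.
rewrite mulr_natl; have /matrixP/(_ j i) := mul_mx_adj A; rewrite !mxE => <-.
by apply: eq_bigr => l _; rewrite mxE.
Qed.

End SetRow.
Arguments delta_row {R m}.

Lemma det_set_rows_cofactor (R : idomainType) m (A : 'M[R]_m) a c : a != c -> \det A != 0 ->
  \det (set_row (set_row A a (cofactor A a)) c (cofactor A c)) =
  \det A * \det (set_row (set_row (A *m A^T) a (delta_row a)) c (delta_row c)).
Proof.
move=> ac dA0; set N := set_row _ c _.
have NAt : N *m A^T = set_row (set_row (A *m A^T) a (fun j => \det A * delta_row a j)) c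
                              (fun j => \det A * delta_row c j).
  apply/matrixP => i j; rewrite !mxE.
  under eq_bigr do rewrite !mxE.
  have cofE b : \sum_l cofactor A b l * A j l = \det A * delta_row b j.
    rewrite mulrC -mul_row_cofactor; apply: eq_bigr => l _; exact: mulrC.
  case: (eqVneq i c) => [_|ic]; first exact: cofE.
  case: (eqVneq i a) => [_|ia]; first exact: cofE.
  by apply: eq_bigr => l _; rewrite mxE.
have := det_mulmx N A^T; rewrite NAt det_tr det_set_rowZ set_rowC // det_set_rowZ.
by rewrite set_rowC 1?eq_sym // mulrC => /(mulIf dA0).
Qed.

Section MDerivDet.
Variables (R : comRingType) (n : nat) (k : 'I_n).
Implicit Types (p : {mpoly R[n]}).

Lemma mderiv_prod m (F : 'I_m -> {mpoly R[n]}) :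
  (\prod_i F i)^`M(k) = \sum_i \prod_j (if j == i then (F j)^`M(k) else F j).
Proof.
elim: m F => [|m IH] F; first by rewrite !big_ord0 -mpolyC1 mderivC.
have maxN (i : 'I_m) : (ord_max == widen_ord (leqnSn m) i) = false.
  by rewrite -val_eqE /= gtn_eqF.
rewrite big_ord_recr mderivM IH big_distrl [RHS]big_ord_recr; congr (_ + _).
  by apply: eq_bigr => i _; rewrite big_ord_recr /= maxN.
rewrite big_ord_recr /= eqxx; congr (_ * _).
by apply: eq_bigr => j _; rewrite eq_sym maxN.
Qed.

Lemma mderiv_signr (b : bool) p : ((-1) ^+ b * p)^`M(k) = (-1) ^+ b * p^`M(k).
Proof. by case: b; rewrite ?mulN1r ?mul1r ?mderivN. Qed.

Lemma mderiv_det m (A : 'M[{mpoly R[n]}]_m) :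
  (\det A)^`M(k) = \sum_i \det (set_row A i (fun l => (A i l)^`M(k))).
Proof.
rewrite raddf_sum /=.
under eq_bigr do rewrite mderiv_signr mderiv_prod mulr_sumr.
rewrite exchange_big /=; apply: eq_bigr => i _; apply: eq_bigr => s _.
by congr (_ * _); apply: eq_bigr => j _; rewrite !mxE; case: eqP => // ->.
Qed.

Lemma mderiv_det_row m (A : 'M[{mpoly R[n]}]_m) c u :
  (forall i l, (A i l)^`M(k) = if i == c then u l else 0) ->
  (\det A)^`M(k) = \det (set_row A c u).
Proof.
move=> dA; rewrite mderiv_det (bigD1 c) //= big1 ?addr0.
  by congr (\det _); apply/matrixP => i l; rewrite !mxE dA eqxx.
move=> i ic; rewrite -(det_set_row0 A i); congr (\det _).
by apply/matrixP => j l; rewrite !mxE dA (negbTE ic).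
Qed.

End MDerivDet.

Lemma mxvec_index_eq m n (a c : 'I_m) (b d : 'I_n) :
  (mxvec_index a b == mxvec_index c d) = (a == c) && (b == d).
Proof. by apply/eqP/andP => [/cast_ord_inj/enum_rank_inj [-> ->]|[/eqP -> /eqP ->]]. Qed.

Lemma sum_mxvec_index (V : nmodType) m n (F : 'I_(m * n) -> V) :
  \sum_k F k = \sum_a \sum_b F (mxvec_index a b).
Proof.
have [g fK gK] := curry_mxvec_bij m n.
rewrite [RHS]pair_big (reindex (uncurry (@mxvec_index m n))) /=.
  by apply: eq_bigr => -[a b].
by exists g => k _; [apply: fK | apply: gK].
Qed.

Section VarMatrix.
Variables (R : comRingType) (m : nat).
Local Notation P := {mpoly R[m * m]}.
Local Notation x_ a b := (mxvec_index a b).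

Definition var_mx : 'M[P]_m := \matrix_(i, j) 'X_(x_ i j).

Lemma mderiv_var_mx a b i l :
  (var_mx i l)^`M(x_ a b) = if i == a then delta_row b l else 0.
Proof.
rewrite mxE mderivX mnm1E mxvec_index_eq /delta_row.
case: (i =P a) => [->|_]; last by rewrite scale0r.
case: (l =P b) => [->|_]; last by rewrite scale0r.
have -> : (U_(x_ a b) - U_(x_ a b))%MM = 0%MM by apply/mnmP => j; rewrite mnmBE subnn mnm0E.
by rewrite mpolyX0 scale1r.
Qed.

Lemma mderiv_det_var_mx a b : (\det var_mx)^`M(x_ a b) = cofactor var_mx a b.
Proof. by rewrite -det_set_row_delta; apply: mderiv_det_row => i l; exact: mderiv_var_mx. Qed.

Lemma mderiv_cofactor_var_mx a b c d : (cofactor var_mx a b)^`M(x_ c d) =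
  if c == a then 0 else \det (set_row (set_row var_mx a (delta_row b)) c (delta_row d)).
Proof.
have dconst (b' l : 'I_m) k : (delta_row b' l : P)^`M(k) = 0.
  by rewrite /delta_row -mpolyC_nat mderivC.
rewrite -det_set_row_delta; case: (eqVneq c a) => [->|ca].
  rewrite -(det_set_row0 (set_row var_mx a (delta_row b)) a).
  apply: mderiv_det_row => i l; rewrite mxE.
  by case: (eqVneq i a) => [_|ia]; rewrite ?dconst // mderiv_var_mx (negbTE ia).
apply: mderiv_det_row => i l; rewrite mxE.
case: (eqVneq i a) => [->|ia]; last by rewrite mderiv_var_mx.
by rewrite eq_sym (negbTE ca) dconst.
Qed.

End VarMatrix.

Section DetMonomials.
Variables (R : comRingType) (m : nat).
Local Notation x_ a b := (mxvec_index a b).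
Local Notation f := (\det (var_mx R m)).

Definition perm_mnm (s : 'S_m) : 'X_{1..m * m} := (\sum_i U_(x_ i (s i)))%MM.

Lemma det_var_mxE : f = \sum_(s : 'S_m) ((-1) ^+ s : R) *: 'X_[perm_mnm s].
Proof.
apply: eq_bigr => s _; rewrite -(rmorph_sign (@mpolyC _ R)) mul_mpolyC -mprodXE.
by congr (_ *: _); apply: eq_bigr => i _; rewrite mxE.
Qed.

Lemma perm_mnmE s a b : perm_mnm s (x_ a b) = (s a == b).
Proof.
rewrite mnm_sumE (bigD1 a) //= big1 ?addn0 => [|i ia]; rewrite mnm1E mxvec_index_eq.
  by rewrite eqxx.
by rewrite (negbTE ia).
Qed.

Lemma perm_mnm_inj : injective perm_mnm.
Proof.
move=> s t st; apply/permP => a; have := perm_mnmE s a (t a).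
by rewrite st perm_mnmE eqxx; case: eqP.
Qed.

Lemma mdeg_perm_mnm s : mdeg (perm_mnm s) = m.
Proof. by rewrite mdeg_sum (eq_bigr (fun=> 1%N)) ?sum1_card ?card_ord // => i _; rewrite mdeg1. Qed.

Lemma mcoeff_det_var_mx x :
  f@_x = \sum_(s : 'S_m) ((-1) ^+ s : R) * (perm_mnm s == x)%:R.
Proof. by rewrite det_var_mxE raddf_sum; apply: eq_bigr => s _; rewrite /= mcoeffZ mcoeffX. Qed.

Lemma mcoeff_det_var_mx_perm s : f@_(perm_mnm s) = (-1) ^+ s.
Proof.
rewrite mcoeff_det_var_mx (bigD1 s) //= eqxx mulr1 big1 ?addr0 // => t ts.
by rewrite (inj_eq perm_mnm_inj) (negbTE ts) mulr0.
Qed.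

Lemma perm_mnm_msupp s : perm_mnm s \in msupp f.
Proof. by rewrite mcoeff_msupp mcoeff_det_var_mx_perm signr_eq0. Qed.

Lemma msupp_det_var_mx x : x \in msupp f -> exists s, x = perm_mnm s.
Proof.
case: (pickP (fun s => perm_mnm s == x)) => [s /eqP <-|none]; first by exists s.
by rewrite mcoeff_msupp mcoeff_det_var_mx big1 ?eqxx // => s _; rewrite none mulr0.
Qed.

Lemma det_var_mx_neq0 : f != 0.
Proof. by apply: contraTneq (perm_mnm_msupp 1) => ->; rewrite msupp0. Qed.

Lemma det_var_mx_homog : f \is m.-homog.
Proof.
rewrite det_var_mxE; apply: rpred_sum => s _; apply: rpredZ.
by rewrite dhomogX /= mdeg_perm_mnm.
Qed.

End DetMonomials.

Section DetDegrees.
Variables (R : comRingType) (m : nat).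
Local Notation f := (\det (var_mx R m)).
Local Notation x_ a b := (mxvec_index a b).

Lemma mmeasure_det_var_mx_le S d : (forall s, mdeg_in S (perm_mnm s) <= d)%N ->
  (mmeasure (mdeg_in S) f <= d.+1)%N.
Proof.
move=> le_d; rewrite mmeasureE; apply/bigmax_leqP_seq => x /msupp_det_var_mx [s ->] _.
by rewrite ltnS le_d.
Qed.

Lemma mmeasure_det_var_mx1 (a b : 'I_m) : mmeasure (mdeg_in [set x_ a b]) f = 2%N.
Proof.
apply/eqP; rewrite eqn_leq mmeasure_det_var_mx_le => [|s]; last first.
  by rewrite mdeg_in1 perm_mnmE leq_b1.
have := mmeasure_mnm_lt (mdeg_in [set x_ a b]) (perm_mnm_msupp R (tperm a b)).
by rewrite /= mdeg_in1 perm_mnmE tpermL eqxx.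
Qed.

Lemma mmeasure_det_var_mx_row (a b b' : 'I_m) : b != b' ->
  (mmeasure (mdeg_in [set x_ a b; x_ a b']) f <= 2)%N.
Proof.
move=> bb'; apply: mmeasure_det_var_mx_le => s.
rewrite mdeg_in2 ?mxvec_index_eq ?eqxx // !perm_mnmE.
by case: eqP => [->|_]; [rewrite (negbTE bb') | case: eqP].
Qed.

Lemma mmeasure_det_var_mx_col (a a' b : 'I_m) : a != a' ->
  (mmeasure (mdeg_in [set x_ a b; x_ a' b]) f <= 2)%N.
Proof.
move=> aa'; apply: mmeasure_det_var_mx_le => s.
rewrite mdeg_in2 ?mxvec_index_eq ?(negbTE aa') // !perm_mnmE.
case: (s a =P b) => [sa|]; case: (s a' =P b) => [sa'|] //.
by move: aa'; rewrite -(inj_eq (@perm_inj _ s)) sa sa' eqxx.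
Qed.

End DetDegrees.

Lemma det_var_mx_not_unit (R : idomainType) m : (0 < m)%N ->
  \det (var_mx R m) \isn't a GRing.unit.
Proof.
move=> m0; apply/negP => /unitrP[g [/mpoly_intro_unit /andP[/eqP fC _] _]].
have : \det (var_mx R m) \is 0.-homog by rewrite fC -alg_mpolyC dhomogZ ?dhomog1.
move/(dhomog_uniq (det_var_mx_neq0 R m) (det_var_mx_homog R m)) => m_eq0.
by rewrite m_eq0 in m0.
Qed.

Lemma det_var_mx_irreducible (R : fieldType) m : (0 < m)%N ->
  irreducible_elt (\det (var_mx R m)).
Proof.
move=> m0; have f0 := det_var_mx_neq0 R m.
split=> //; split; first exact: det_var_mx_not_unit.
move=> q r fqr; have /norP[q0 r0] : ~~ ((q == 0) || (r == 0)) by rewrite -mulf_eq0 -fqr.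
pose o := Ordinal m0.
have inv_row a b b' : involves q (mxvec_index a b) = involves q (mxvec_index a b').
  have [->//|bb'] := eqVneq b b'.
  by apply: (involvesM_eq fqr f0); rewrite ?mmeasure_det_var_mx1 ?mmeasure_det_var_mx_row.
have inv_col a a' b : involves q (mxvec_index a b) = involves q (mxvec_index a' b).
  have [->//|aa'] := eqVneq a a'.
  by apply: (involvesM_eq fqr f0); rewrite ?mmeasure_det_var_mx1 ?mmeasure_det_var_mx_col.
have inv_o a b : involves q (mxvec_index a b) = involves q (mxvec_index o o).
  by rewrite (inv_row a b o) (inv_col a o o).
have [qo|qo] := boolP (involves q (mxvec_index o o)); [right | left].
  apply: unit_of_involves_none => //; case/mxvec_indexP => a b.
  by rewrite (involvesM_xor fqr f0 (mmeasure_det_var_mx1 R a b)) inv_o qo.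
apply: unit_of_involves_none => //.
by case/mxvec_indexP => a b; rewrite inv_o.
Qed.

Section DetEigen.
Variables (R : idomainType) (m : nat).
Local Notation X := (var_mx R m).

Lemma laplacian_det_var_mx : \sum_(k < m * m) ((\det X)^`M(k))^`M(k) = 0.
Proof.
rewrite sum_mxvec_index big1 // => a _; rewrite big1 // => b _.
by rewrite mderiv_det_var_mx mderiv_cofactor_var_mx eqxx.
Qed.

Definition det_eigenvalue : {mpoly R[m * m]} :=
  - \sum_a \sum_(c | c != a) \det (set_row (set_row (X *m X^T) a (delta_row a)) c (delta_row c)).

Lemma Lop_det_var_mx : Lop (\det X) = det_eigenvalue * \det X.
Proof.
rewrite /Lop laplacian_det_var_mx mulr0 sub0r mulNr; congr (- _).
rewrite sum_mxvec_index mulr_suml; apply: eq_bigr => a _.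
under eq_bigr do rewrite sum_mxvec_index.
rewrite exchange_big /= (bigD1 a) //= big1 ?add0r => [|b _]; last first.
  by rewrite big1 // => d _; rewrite !mderiv_det_var_mx mderiv_cofactor_var_mx eqxx mulr0.
rewrite mulr_suml; apply: eq_bigr => c; rewrite eq_sym => ac.
under eq_bigr do under eq_bigr do
  rewrite !mderiv_det_var_mx mderiv_cofactor_var_mx (negbTE ac).
rewrite (@det_set_row2_sum _ _ X a c (cofactor X a) (cofactor X c)) //.
rewrite det_set_rows_cofactor ?det_var_mx_neq0 //.
exact: mulrC.
Qed.

End DetEigen.

Theorem theorem3 (R : realType) (m : nat) (hm : (1 <= m)%N) :
  irreducible_elt (detpoly R m) /\
  detpoly R m \is m.-homog /\ detpoly R m != 0 /\
  eigenfunctionL (detpoly R m) /\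
  exists lambda : {mpoly R[m * m]}, Lop (detpoly R m) = lambda * detpoly R m.
Proof.
have eigen : exists lambda, Lop (detpoly R m) = lambda * detpoly R m.
  by exists (det_eigenvalue R m); exact: Lop_det_var_mx.
have fhomog := det_var_mx_homog R m.
split; first exact: det_var_mx_irreducible.
by do !split=> //; [exact: det_var_mx_neq0 | exists m].
Qed.
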